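(* Let $S\subset \mathbb{R}^2$ be such that both $S$ and $S^\mathsf{c}$ satisfy the $r$-rolling condition. Fix $\alpha\in (0,r)$ and $0<t \leq \min\{\alpha, 2\alpha^2/r\}$. There is a constant $A > 0$ depending only on $(r,\alpha)$ such that, for any $z \notin S$ with $0<\alpha -\operatorname{dist}(z, S)\leq t/A$ and any $x_1, x_2 \in \partial B(z, \alpha) \cap S$, we have \[ [x_1 x_2] \subset B(\partial S, t), \qquad \|x_1 -x_2\| \leq \sqrt{t}, \qquad \angle( [x_1 x_2], \partial S ) \leq \sqrt{t}. \]
   Context: A set $T\subset\mathbb{R}^2$ satisfies the $r$-rolling condition ($r>0$) if for every $x \in \partial T$ there is an open ball $B$ of radius $r$ with $B \cap T = \emptyset$ and $x \in \partial B$; when $S$ and $S^\mathsf{c}=\mathbb{R}^2\setminus S$ both satisfy it, $\partial S$ has a tangent line at every point and the metric projection $P_{\partial S}(x)$ (the nearest point of $\partial S$ to $x$) is unique whenever $\operatorname{dist}(x,\partial S)<r$. $B(z,\alpha)$ is the open ball of center $z$ and radius $\alpha$; $B(T,\varepsilon)=\{x:\operatorname{dist}(x,T)<\varepsilon\}$; $[x_1x_2]$ is the closed segment. For a curve $C$ (differentiable almost everywhere) and a curve $D$ with $C\subset B(D,r)$ and unique projections, the deviation angle is $\angle(C,D)=\sup_{x\in C}\angle(\vec C_x,\vec D_{P_D(x)})$, where $\vec C_x$ is the tangent line of $C$ at $x$ and the angle between two lines lies in $[0,\pi/2]$. (For a segment, the tangent is the line containing it.) *)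

From Stdlib Require Import Reals.
From Coquelicot Require Import Coquelicot.
Open Scope R_scope.

Definition pt : Type := (R * R)%type.

Definition psub (x y : pt) : pt := (fst x - fst y, snd x - snd y).
Definition dot (u v : pt) : R := fst u * fst v + snd u * snd v.
Definition enorm (u : pt) : R := sqrt (dot u u).
Definition edist (x y : pt) : R := enorm (psub x y).

Definition compl (S : pt -> Prop) : pt -> Prop := fun x => ~ S x.

Definition boundary (T : pt -> Prop) (x : pt) : Prop :=
  forall eps : R, 0 < eps ->
    (exists y, T y /\ edist x y < eps) /\ (exists y, ~ T y /\ edist x y < eps).

Definition oball (c : pt) (a : R) (x : pt) : Prop := edist x c < a.
Definition sphere (c : pt) (a : R) (x : pt) : Prop := edist x c = a.

Definition rolling (r : R) (T : pt -> Prop) : Prop :=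
  forall x, boundary T x ->
    exists c : pt, (forall y, oball c r y -> ~ T y) /\ sphere c r x.

(* dist(x, T) = inf { ||x - y|| : y in T } (meaningful for nonempty T) *)
Definition setdist (x : pt) (T : pt -> Prop) : R :=
  real (Glb_Rbar (fun d => exists y, T y /\ d = edist x y)).

Definition nbhd (T : pt -> Prop) (eps : R) (x : pt) : Prop :=
  exists y, T y /\ edist x y < eps.

Definition segment (x1 x2 : pt) (x : pt) : Prop :=
  exists l : R, 0 <= l <= 1 /\
    x = (fst x1 + l * (fst x2 - fst x1), snd x1 + l * (snd x2 - snd x1)).

Definition is_proj (D : pt -> Prop) (x p : pt) : Prop :=
  D p /\ forall q, D q -> edist x p <= edist x q.

(* the line through p with nonzero direction v is the tangent line of D at p:
   points q of D near p make a vanishing angle with the line *)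
Definition tangent_dir (D : pt -> Prop) (p v : pt) : Prop :=
  v <> (0, 0) /\ D p /\
  forall eps : R, 0 < eps -> exists delta : R, 0 < delta /\
    forall q, D q -> 0 < edist q p < delta ->
      Rabs (fst v * snd (psub q p) - snd v * fst (psub q p))
        <= eps * enorm v * edist q p.

Definition line_angle (u v : pt) : R :=
  acos (Rabs (dot u v) / (enorm u * enorm v)).

From Stdlib Require Import Reals Lra Classical.
From Coquelicot Require Import Coquelicot.
Open Scope R_scope.

(* At a boundary point p the inner and outer rolling balls are tangent to each
   other, so they define a unit normal n(p); disjointness of inner and outer balls
   at two boundary points makes n Lipschitz with constant 1/r.  Put
   delta = alpha - dist(z, S).  The radius [z x_i] crosses the boundary at
   distance at least alpha - delta from z, and the inner ball there misses
   B(z, alpha - delta); hence x_i lies within O(sqrt delta) of the antipode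
   z + alpha n_i, and with the Lipschitz bound |x1 - x2| = O(sqrt delta).  Each
   point of [x1 x2] is within O(delta) both of that inner ball (inside S) and of
   B(z, alpha - delta) (outside S), hence of the boundary.  The normal at the
   projection p of such a point is within O(sqrt delta) of n_1, and in the plane
   the angle between the chord and the tangent at p equals the angle between the
   mean radius of the chord and n(p), whose cosine is 1 - O(delta).  A large A
   turns these bounds into the required ones in t. *)

(** * Plane geometry *)

Definition sqdist (x y : pt) : R := dot (psub x y) (psub x y).
Definition lerp (a b : pt) (l : R) : pt :=
  (fst a + l * (fst b - fst a), snd a + l * (snd b - snd a)).
Definition shift (p : pt) (s : R) (n : pt) : pt := (fst p + s * fst n, snd p + s * snd n).
Definition perp (n : pt) : pt := (- snd n, fst n).

Lemma dot_self_nonneg u : 0 <= dot u u.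
Proof. unfold dot; nra. Qed.

Lemma enorm_nonneg u : 0 <= enorm u.
Proof. apply sqrt_pos. Qed.

Lemma enorm_sq u : enorm u ^ 2 = dot u u.
Proof. unfold enorm. rewrite pow2_sqrt; [reflexivity | apply dot_self_nonneg]. Qed.

Lemma enorm_pos u : u <> (0, 0) -> 0 < enorm u.
Proof.
  intros Hu. apply sqrt_lt_R0. destruct u as [u1 u2]; unfold dot; simpl.
  destruct (Req_dec u1 0), (Req_dec u2 0); subst; [tauto | nra | nra | nra].
Qed.

Lemma enorm_unit n : dot n n = 1 -> enorm n = 1.
Proof. intros Hn. unfold enorm. rewrite Hn. apply sqrt_1. Qed.

Lemma edist_nonneg x y : 0 <= edist x y.
Proof. apply enorm_nonneg. Qed.

Lemma edist_sq x y : edist x y ^ 2 = sqdist x y.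
Proof. apply enorm_sq. Qed.

Lemma edist_sym x y : edist x y = edist y x.
Proof. unfold edist, enorm, dot, psub; simpl. f_equal. ring. Qed.

Lemma edist_pos x y : x <> y -> 0 < edist x y.
Proof.
  intros Hxy. apply enorm_pos. intro E. apply Hxy.
  destruct x, y; unfold psub in E; simpl in E. injection E; intros; f_equal; lra.
Qed.

Lemma edist_le_sq x y b : 0 <= b -> sqdist x y <= b ^ 2 -> edist x y <= b.
Proof.
  intros Hb H. pose proof (edist_nonneg x y). rewrite <- edist_sq in H. nra.
Qed.

Lemma edist_lt_sq x y b : 0 <= b -> sqdist x y < b ^ 2 -> edist x y < b.
Proof.
  intros Hb H. pose proof (edist_nonneg x y). rewrite <- edist_sq in H. nra.
Qed.

Lemma sqdist_le_sq x y b : edist x y <= b -> sqdist x y <= b ^ 2.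
Proof. intros H. pose proof (edist_nonneg x y). rewrite <- edist_sq. nra. Qed.

Lemma sq_le_sqdist x y b : 0 <= b -> b <= edist x y -> b ^ 2 <= sqdist x y.
Proof. intros Hb H. rewrite <- edist_sq. nra. Qed.

Lemma edist_scaled x y x' y' k :
  0 <= k -> sqdist x y = k ^ 2 * sqdist x' y' -> edist x y = k * edist x' y'.
Proof.
  intros Hk E. unfold edist at 1, enorm. fold (sqdist x y). rewrite E.
  rewrite sqrt_mult_alt, sqrt_pow2 by (auto; apply pow2_ge_0). reflexivity.
Qed.

Lemma cauchy_schwarz u v : Rabs (dot u v) <= enorm u * enorm v.
Proof.
  assert (Hsq : dot u v ^ 2 <= (enorm u * enorm v) ^ 2).
  { rewrite Rpow_mult_distr, !enorm_sq. destruct u as [u1 u2], v as [v1 v2].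
    unfold dot; simpl. pose proof (pow2_ge_0 (u1 * v2 - u2 * v1)). nra. }
  pose proof (enorm_nonneg u); pose proof (enorm_nonneg v).
  rewrite <- (Rabs_pos_eq (enorm u * enorm v)) by nra.
  apply Rsqr_le_abs_0. unfold Rsqr. nra.
Qed.

Lemma edist_triangle x y w : edist x w <= edist x y + edist y w.
Proof.
  pose proof (cauchy_schwarz (psub x y) (psub y w)) as CS.
  pose proof (Rle_abs (dot (psub x y) (psub y w))).
  pose proof (edist_nonneg x y); pose proof (edist_nonneg y w).
  apply edist_le_sq; [lra |].
  replace (sqdist x w) with
    (sqdist x y + 2 * dot (psub x y) (psub y w) + sqdist y w)
    by (destruct x, y, w; unfold sqdist, dot, psub; simpl; ring).
  rewrite <- !edist_sq. fold (edist x y) (edist y w) in CS. nra.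
Qed.

Lemma lerp0 a b : lerp a b 0 = a.
Proof. destruct a, b; unfold lerp; simpl; f_equal; ring. Qed.

Lemma lerp1 a b : lerp a b 1 = b.
Proof. destruct a, b; unfold lerp; simpl; f_equal; ring. Qed.

Lemma edist_lerp a b l m : edist (lerp a b l) (lerp a b m) = Rabs (l - m) * edist a b.
Proof.
  apply edist_scaled; [apply Rabs_pos |]. rewrite pow2_abs.
  destruct a, b; unfold sqdist, lerp, dot, psub; simpl; ring.
Qed.

Lemma edist_lerp_le x a b mu B : 0 <= mu <= 1 ->
  edist x a <= B -> edist x b <= B -> edist x (lerp a b mu) <= B.
Proof.
  intros Hmu Ha Hb. assert (0 <= B) by (pose proof (edist_nonneg x a); lra).
  apply sqdist_le_sq in Ha; apply sqdist_le_sq in Hb.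
  apply edist_le_sq; [lra |].
  replace (sqdist x (lerp a b mu)) with
    ((1 - mu) * sqdist x a + mu * sqdist x b - mu * (1 - mu) * sqdist a b)
    by (destruct x, a, b; unfold sqdist, lerp, dot, psub; simpl; ring).
  assert (0 <= sqdist a b) by apply dot_self_nonneg.
  assert (0 <= mu * (1 - mu) * sqdist a b) by (apply Rmult_le_pos; nra).
  nra.
Qed.

Lemma edist_lerp_same z x1 x2 mu : 0 <= mu ->
  edist (lerp z x1 mu) (lerp z x2 mu) = mu * edist x1 x2.
Proof.
  intros Hmu. apply edist_scaled; [lra |].
  destruct z, x1, x2; unfold sqdist, lerp, dot, psub; simpl; ring.
Qed.

Lemma edist_shift_same z a n n' : 0 <= a ->
  edist (shift z a n) (shift z a n') = a * edist n n'.
Proof.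
  intros Ha. apply edist_scaled; [lra |].
  destruct z, n, n'; unfold sqdist, shift, dot, psub; simpl; ring.
Qed.

(** * Boundaries and rolling normals *)

Lemma disjoint_balls_far a b ra rb : 0 < ra -> 0 < rb ->
  (forall y, oball a ra y -> oball b rb y -> False) -> ra + rb <= edist a b.
Proof.
  intros Ha Hb Hdisj. apply Rnot_lt_le. intro Hlt.
  set (k := ra / (ra + rb)).
  assert (Hk : 0 <= k <= 1 /\ k * (ra + rb) = ra).
  { unfold k; split; [split |]; [apply Rle_mult_inv_pos | apply Rle_div_l | field]; lra. }
  pose proof (edist_nonneg a b).
  apply (Hdisj (lerp a b k)); unfold oball.
  - rewrite <- (lerp0 a b) at 2. rewrite edist_lerp, Rabs_pos_eq by lra. nra.
  - rewrite <- (lerp1 a b) at 2. rewrite edist_lerp, Rabs_minus_sym, Rabs_pos_eq by lra.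
    nra.
Qed.

Lemma boundary_compl S p : boundary S p -> boundary (compl S) p.
Proof.
  intros H eps He. destruct (H eps He) as [[y1 [H1 H1']] [y2 [H2 H2']]].
  split; [exists y2 | exists y1]; unfold compl; auto.
Qed.

Lemma boundary_of_param S a b m :
  (forall eta, 0 < eta ->
     (exists l, S (lerp a b l) /\ Rabs (l - m) < eta) /\
     (exists l, ~ S (lerp a b l) /\ Rabs (l - m) < eta)) ->
  boundary S (lerp a b m).
Proof.
  intros H eps Heps. pose proof (edist_nonneg a b).
  assert (Heta : 0 < eps / (edist a b + 1)) by (apply Rdiv_lt_0_compat; lra).
  assert (Hclose : forall l, Rabs (l - m) < eps / (edist a b + 1) ->
                     edist (lerp a b m) (lerp a b l) < eps).
  { intros l Hl. rewrite edist_lerp, Rabs_minus_sym.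
    apply Rmult_lt_compat_r with (r := edist a b + 1) in Hl; [| lra].
    replace (eps / (edist a b + 1) * (edist a b + 1)) with eps in Hl by (field; lra).
    pose proof (Rabs_pos (l - m)). nra. }
  destruct (H _ Heta) as [[l1 [H1 H1']] [l2 [H2 H2']]].
  split; [exists (lerp a b l1) | exists (lerp a b l2)]; auto.
Qed.

Lemma boundary_on_segment S a b : ~ S a -> S b ->
  exists mu, 0 <= mu <= 1 /\ boundary S (lerp a b mu).
Proof.
  intros Ha Hb.
  set (E := fun mu => 0 <= mu <= 1 /\ ~ S (lerp a b mu)).
  assert (HE0 : E 0) by (split; [lra | rewrite lerp0; auto]).
  destruct (completeness E) as [m [Hub Hleast]].
  { exists 1. intros x [Hx _]. lra. }
  { exists 0. exact HE0. }
  assert (Hm : 0 <= m <= 1).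
  { split; [apply Hub, HE0 | apply Hleast; intros x [Hx _]; lra]. }
  exists m. split; [exact Hm |]. apply boundary_of_param. intros eta Heta.
  destruct (classic (S (lerp a b m))) as [HSm | HSm].
  - split; [exists m; split; [auto | rewrite Rminus_diag, Rabs_R0; lra] |].
    apply NNPP. intro Hno. assert (m <= m - eta); [| lra].
    apply Hleast. intros l El. apply Rnot_lt_le. intro Hl. apply Hno.
    exists l. split; [apply El |]. pose proof (Hub l El). apply Rabs_def1; lra.
  - split; [| exists m; split; [auto | rewrite Rminus_diag, Rabs_R0; lra]].
    assert (Hm1 : m < 1).
    { destruct (Req_dec m 1) as [-> | ]; [rewrite lerp1 in HSm; tauto | lra]. }
    set (l := m + Rmin (eta / 2) ((1 - m) / 2)).
    assert (Hl : m < l <= 1 /\ l - m < eta).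
    { unfold l. pose proof (Rmin_l (eta / 2) ((1 - m) / 2)).
      pose proof (Rmin_r (eta / 2) ((1 - m) / 2)).
      assert (0 < Rmin (eta / 2) ((1 - m) / 2)) by (apply Rmin_glb_lt; lra). lra. }
    exists l. split; [| apply Rabs_def1; lra].
    apply NNPP. intro Hn. assert (l <= m) by (apply Hub; split; [lra | auto]). lra.
Qed.

Lemma near_boundary_between S x a b B : ~ S a -> S b ->
  edist x a <= B -> edist x b <= B -> exists p, boundary S p /\ edist x p <= B.
Proof.
  intros Ha Hb HxA HxB. destruct (boundary_on_segment S a b Ha Hb) as [mu [Hmu Hbd]].
  exists (lerp a b mu). split; [exact Hbd | apply edist_lerp_le; auto].
Qed.

Lemma oball_approach c rho x D eta : 0 < eta <= rho -> 0 <= D ->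
  edist x c <= rho + D -> exists y, oball c rho y /\ edist x y <= D + eta.
Proof.
  intros Heta HD Hx. set (th := (rho - eta) / (rho + D)).
  assert (Hth : 0 <= th <= 1 /\ th * (rho + D) = rho - eta).
  { unfold th; split; [split |]; [apply Rle_mult_inv_pos | apply Rle_div_l | field]; lra. }
  pose proof (edist_nonneg x c).
  exists (lerp c x th). unfold oball. split.
  - rewrite <- (lerp0 c x) at 2. rewrite edist_lerp, edist_sym, Rabs_pos_eq by lra. nra.
  - rewrite <- (lerp1 c x) at 1. rewrite edist_lerp, edist_sym, Rabs_pos_eq by lra. nra.
Qed.

Lemma setdist_le S z y : S y -> setdist z S <= edist z y.
Proof.
  intros Hy. unfold setdist.
  set (E := fun d => exists y, S y /\ d = edist z y).
  destruct (Glb_Rbar_correct E) as [Hlb Hglb].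
  assert (L0 : Rbar_le (Finite 0) (Glb_Rbar E)).
  { apply Hglb. intros x [w [_ ->]]. apply edist_nonneg. }
  assert (L1 : Rbar_le (Glb_Rbar E) (Finite (edist z y))) by (apply Hlb; exists y; auto).
  destruct (Glb_Rbar E); simpl in *; tauto.
Qed.

Lemma edist_boundary_ge S z d p : boundary S p ->
  (forall y, S y -> d <= edist z y) -> d <= edist z p.
Proof.
  intros Hb Hfar. apply Rnot_lt_le. intro Hlt.
  destruct (Hb (d - edist z p)) as [[y [Hy Hpy]] _]; [lra |].
  pose proof (Hfar y Hy). pose proof (edist_triangle z p y). lra.
Qed.

Definition rolling_normal (r : R) (S : pt -> Prop) (p n : pt) : Prop :=
  dot n n = 1 /\
  (forall y, oball (shift p (- r) n) r y -> ~ S y) /\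
  (forall y, oball (shift p r n) r y -> S y).

Lemma rolling_normal_exists r S p : 0 < r -> rolling r S -> rolling r (compl S) ->
  boundary S p -> exists n, rolling_normal r S p n.
Proof.
  intros Hr HS HC Hb.
  destruct (HS p Hb) as [c [Hc Hcp]].
  destruct (HC p (boundary_compl S p Hb)) as [c' [Hc' Hc'p]].
  assert (Hcc : r + r <= edist c c').
  { apply disjoint_balls_far; auto. intros y H1 H2. exact (Hc' y H2 (Hc y H1)). }
  apply sq_le_sqdist in Hcc; [| lra].
  unfold sphere in Hcp, Hc'p. apply (f_equal (fun u => u ^ 2)) in Hcp, Hc'p.
  rewrite edist_sq in Hcp, Hc'p.
  (* the two tangent balls are antipodal: [p] is the midpoint of [c] and [c'] *)
  destruct c as [c1 c2], c' as [d1 d2], p as [p1 p2].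
  unfold sqdist, dot, psub in Hcc, Hcp, Hc'p; simpl in Hcc, Hcp, Hc'p.
  assert (Hmid : (c1 + d1 - 2 * p1)² + (c2 + d2 - 2 * p2)² <= 0)
    by (unfold Rsqr; nra).
  assert (E1 : (c1 + d1 - 2 * p1)² = 0) by (pose proof (Rle_0_sqr (c2 + d2 - 2 * p2));
    pose proof (Rle_0_sqr (c1 + d1 - 2 * p1)); lra).
  assert (E2 : (c2 + d2 - 2 * p2)² = 0) by (pose proof (Rle_0_sqr (c2 + d2 - 2 * p2));
    pose proof (Rle_0_sqr (c1 + d1 - 2 * p1)); lra).
  apply Rsqr_0_uniq in E1, E2.
  set (n := ((d1 - p1) / r, (d2 - p2) / r)).
  assert (Hn1 : r * fst n = d1 - p1) by (simpl; field; lra).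
  assert (Hn2 : r * snd n = d2 - p2) by (simpl; field; lra).
  clearbody n.
  exists n. split; [| split].
  - apply Rmult_eq_reg_l with (r ^ 2); [| apply pow_nonzero; lra].
    unfold dot. replace (r ^ 2 * (fst n * fst n + snd n * snd n)) with
      ((r * fst n) ^ 2 + (r * snd n) ^ 2) by ring.
    rewrite Hn1, Hn2. nra.
  - replace (shift (p1, p2) (- r) n) with (c1, c2) by (unfold shift; simpl; f_equal; nra).
    exact Hc.
  - replace (shift (p1, p2) r n) with (d1, d2) by (unfold shift; simpl; f_equal; nra).
    intros y Hy. apply NNPP. exact (Hc' y Hy).
Qed.

Lemma rolling_normal_lipschitz r S p n p' n' : 0 < r ->
  rolling_normal r S p n -> rolling_normal r S p' n' -> r * edist n n' <= edist p p'.
Proof.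
  intros Hr [Hn [Out In]] [Hn' [Out' In']].
  assert (A1 : r + r <= edist (shift p (- r) n) (shift p' r n')).
  { apply disjoint_balls_far; auto. intros y Y1 Y2. exact (Out y Y1 (In' y Y2)). }
  assert (A2 : r + r <= edist (shift p' (- r) n') (shift p r n)).
  { apply disjoint_balls_far; auto. intros y Y1 Y2. exact (Out' y Y1 (In y Y2)). }
  apply sq_le_sqdist in A1, A2; try lra.
  apply Rsqr_incr_0_var; [| apply edist_nonneg].
  rewrite Rsqr_mult, !Rsqr_pow2, !edist_sq.
  destruct p as [p1 p2], n as [n1 n2], p' as [q1 q2], n' as [m1 m2].
  unfold sqdist, dot, psub, shift in *; simpl in *. nra.
Qed.

Lemma boundary_off_normal r S p n h : 0 < h < r -> rolling_normal r S p n ->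
  exists s, Rabs s * r <= h ^ 2 /\ boundary S (shift (shift p h (perp n)) s n).
Proof.
  intros Hh [Hn [Out In]].
  set (q := shift p h (perp n)). set (k := h ^ 2 / r).
  assert (Hk : 0 <= k < h /\ k * r = h ^ 2).
  { unfold k. split; [split |]; [apply Rle_mult_inv_pos | apply Rlt_div_l | field]; nra. }
  (* both [shift q (-k) n] and [shift q k n] lie at squared distance [h^2 + (r-k)^2 < r^2]
     from the centre of the corresponding tangent ball *)
  assert (Hsq : forall e, e ^ 2 = 1 -> sqdist (shift q (e * k) n) (shift p (e * r) n) < r ^ 2).
  { intros e He. unfold q.
    replace (sqdist _ _) with (h ^ 2 * dot n n + (r - k) ^ 2 * (e ^ 2 * dot n n))
      by (destruct p, n; unfold sqdist, shift, perp, dot, psub; simpl; ring).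
    rewrite Hn, He. nra. }
  assert (Ha : ~ S (shift q (- k) n)).
  { apply Out. unfold oball. apply edist_lt_sq; [lra |].
    replace (- k) with (-1 * k) by ring. replace (- r) with (-1 * r) by ring.
    apply Hsq. ring. }
  assert (Hb : S (shift q k n)).
  { apply In. unfold oball. apply edist_lt_sq; [lra |].
    rewrite <- (Rmult_1_l k), <- (Rmult_1_l r) at 1. apply Hsq. ring. }
  destruct (boundary_on_segment S _ _ Ha Hb) as [mu [Hmu Hbd]].
  exists ((2 * mu - 1) * k). split.
  - rewrite Rabs_mult, (Rabs_pos_eq k) by lra.
    assert (Rabs (2 * mu - 1) <= 1) by (apply Rabs_le; lra). nra.
  - replace (shift q ((2 * mu - 1) * k) n) with (lerp (shift q (- k) n) (shift q k n) mu)
      by (destruct q, n; unfold lerp, shift; simpl; f_equal; ring).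
    exact Hbd.
Qed.

Lemma edist_off_normal p n h s : dot n n = 1 -> 0 < h -> Rabs s <= h ->
  0 < edist (shift (shift p h (perp n)) s n) p <= 2 * h.
Proof.
  intros Hn Hh Hs. set (q := shift (shift p h (perp n)) s n).
  assert (Hqp : sqdist q p = h ^ 2 + s ^ 2).
  { unfold q. rewrite <- (Rmult_1_r (h ^ 2)), <- (Rmult_1_r (s ^ 2)), <- Hn.
    destruct p, n; unfold sqdist, shift, perp, dot, psub; simpl; ring. }
  assert (Hs2 : s ^ 2 <= h ^ 2) by (rewrite <- (pow2_abs s); pose proof (Rabs_pos s); nra).
  split.
  - assert (Hpos : 0 < edist q p ^ 2) by (rewrite edist_sq, Hqp; nra).
    pose proof (edist_nonneg q p). nra.
  - apply edist_le_sq; [lra |]. nra.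
Qed.

Lemma tangent_normal_defect r S p n v h eps : 0 < h < r -> rolling_normal r S p n ->
  0 <= eps ->
  (forall q, boundary S q -> 0 < edist q p <= 2 * h ->
     Rabs (fst v * snd (psub q p) - snd v * fst (psub q p)) <= eps * enorm v * edist q p) ->
  r * Rabs (dot v n) <= 2 * r * eps * enorm v + h * enorm v.
Proof.
  intros Hh Hnormal Heps Htan. pose proof Hnormal as [Hn _].
  pose proof (enorm_nonneg v) as Hv.
  assert (Hc : Rabs (dot v (perp n)) <= enorm v).
  { pose proof (cauchy_schwarz v (perp n)) as CS.
    rewrite (enorm_unit (perp n)) in CS by (rewrite <- Hn; unfold perp, dot; simpl; ring).
    lra. }
  destruct (boundary_off_normal r S p n h Hh Hnormal) as [s [Hsk Hbq]].
  pose proof (edist_off_normal p n h s Hn ltac:(lra) ltac:(nra)) as Hdist.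
  set (q := shift (shift p h (perp n)) s n) in Hbq, Hdist.
  specialize (Htan q Hbq Hdist).
  replace (fst v * snd (psub q p) - snd v * fst (psub q p))
    with (h * dot v n - s * dot v (perp n)) in Htan
    by (unfold q; destruct p, n, v; unfold shift, perp, dot, psub; simpl; ring).
  (* [h |v.n| <= |h v.n - s v.perp n| + |s| |v| <= 2 eps |v| h + h^2 |v| / r] *)
  assert (Htri : Rabs (h * dot v n) <=
                 Rabs (h * dot v n - s * dot v (perp n)) + Rabs (s * dot v (perp n))).
  { replace (h * dot v n) with ((h * dot v n - s * dot v (perp n)) + s * dot v (perp n))
      at 1 by ring.
    apply Rabs_triang. }
  rewrite !Rabs_mult, (Rabs_pos_eq h) in Htri by lra.
  assert (Hsc : Rabs s * Rabs (dot v (perp n)) * r <= h ^ 2 * enorm v).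
  { pose proof (Rabs_pos s). pose proof (Rabs_pos (dot v (perp n))).
    apply Rle_trans with (Rabs s * r * enorm v).
    - assert (0 <= Rabs s * r * (enorm v - Rabs (dot v (perp n))))
        by (apply Rmult_le_pos; [apply Rmult_le_pos |]; lra). nra.
    - apply Rmult_le_compat_r; lra. }
  assert (Htn : eps * enorm v * edist q p <= eps * enorm v * (2 * h))
    by (apply Rmult_le_compat_l; [apply Rmult_le_pos |]; lra).
  assert (Hsum : h * Rabs (dot v n) * r <=
                 (eps * enorm v * (2 * h) + Rabs s * Rabs (dot v (perp n))) * r)
    by (apply Rmult_le_compat_r; lra).
  apply Rmult_le_reg_l with h; [lra |]. nra.
Qed.

Lemma tangent_dir_perp_normal r S p n v : 0 < r -> rolling_normal r S p n ->
  tangent_dir (boundary S) p v -> dot v n = 0.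
Proof.
  intros Hr Hnormal [Hv0 [_ Htan]]. pose proof Hnormal as [Hn _].
  apply NNPP. intro Hw.
  assert (Hnv : 0 < enorm v) by (apply enorm_pos; auto).
  assert (Hwpos : 0 < Rabs (dot v n)) by (apply Rabs_pos_lt; auto).
  assert (Hwv : Rabs (dot v n) <= enorm v).
  { pose proof (cauchy_schwarz v n) as CS. rewrite (enorm_unit n Hn) in CS. lra. }
  set (eps := Rabs (dot v n) / (4 * enorm v)).
  assert (Heps : 0 < eps) by (apply Rdiv_lt_0_compat; lra).
  destruct (Htan eps Heps) as [dl [Hdl Hq]].
  set (h := Rmin (dl / 4) (r * eps)).
  assert (Hh : 0 < h /\ h <= dl / 4 /\ h <= r * eps).
  { unfold h. split; [apply Rmin_glb_lt; nra |].
    split; [apply Rmin_l | apply Rmin_r]. }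
  (* [r |v.n| <= 2 r eps |v| + h |v| <= r |v.n| / 2 + r |v.n| / 4] *)
  pose proof (tangent_normal_defect r S p n v h eps) as Hdefect.
  assert (Hrv : eps * enorm v = Rabs (dot v n) / 4) by (unfold eps; field; lra).
  assert (r * Rabs (dot v n) <= 2 * r * eps * enorm v + h * enorm v).
  { apply Hdefect; [split; [lra | unfold eps in *; nra] | exact Hnormal | lra |].
    intros q Hbq Hqp. apply Hq; [exact Hbq | lra]. }
  nra.
Qed.

Lemma dot_normals_sq u v a b : dot u a = 0 -> dot v b = 0 -> 0 < dot a a -> 0 < dot b b ->
  dot u v ^ 2 * dot a a * dot b b = dot a b ^ 2 * dot u u * dot v v.
Proof.
  destruct u as [u1 u2], v as [v1 v2], a as [a1 a2], b as [b1 b2]; unfold dot; simpl.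
  intros Hu Hv Ha Hb.
  (* [|a|^2 u = (u . a) a + (u . perp a) perp a], and likewise for [v] and [b] *)
  set (pu := u2 * a1 - u1 * a2). set (pv := v2 * b1 - v1 * b2).
  assert (Huv : (a1 * a1 + a2 * a2) * (b1 * b1 + b2 * b2) * (u1 * v1 + u2 * v2)
                = pu * pv * (a1 * b1 + a2 * b2)
                  + (u1 * a1 + u2 * a2) * ((v1 * b1 + v2 * b2) * (a1 * b1 + a2 * b2)
                                           + pv * (a2 * b1 - a1 * b2))
                  + (v1 * b1 + v2 * b2) * pu * (a1 * b2 - a2 * b1))
    by (unfold pu, pv; ring).
  assert (Hpu : pu ^ 2 = (a1 * a1 + a2 * a2) * (u1 * u1 + u2 * u2) - (u1 * a1 + u2 * a2) ^ 2)
    by (unfold pu; ring).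
  assert (Hpv : pv ^ 2 = (b1 * b1 + b2 * b2) * (v1 * v1 + v2 * v2) - (v1 * b1 + v2 * b2) ^ 2)
    by (unfold pv; ring).
  rewrite Hu, Hv in Huv. rewrite Hu in Hpu. rewrite Hv in Hpv.
  apply Rmult_eq_reg_l with ((a1 * a1 + a2 * a2) * (b1 * b1 + b2 * b2)); [| nra].
  transitivity (((a1 * a1 + a2 * a2) * (b1 * b1 + b2 * b2) * (u1 * v1 + u2 * v2)) ^ 2);
    [ring |].
  rewrite Huv.
  transitivity ((a1 * b1 + a2 * b2) ^ 2 * pu ^ 2 * pv ^ 2); [ring |].
  rewrite Hpu, Hpv. ring.
Qed.

Lemma line_angle_normals u v a b : 0 < dot u u -> 0 < dot v v -> 0 < dot a a -> 0 < dot b b ->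
  dot u a = 0 -> dot v b = 0 -> line_angle u v = line_angle a b.
Proof.
  intros Hu Hv Ha Hb Hua Hvb. unfold line_angle. f_equal.
  pose proof (dot_normals_sq u v a b Hua Hvb Ha Hb) as Hsq.
  rewrite <- (pow2_abs (dot u v)), <- (pow2_abs (dot a b)), <- !enorm_sq in Hsq.
  assert (Hpos : forall w, 0 < dot w w -> 0 < enorm w)
    by (intros w Hw; apply sqrt_lt_R0; exact Hw).
  pose proof (Hpos u Hu); pose proof (Hpos v Hv); pose proof (Hpos a Ha); pose proof (Hpos b Hb).
  pose proof (Rabs_pos (dot u v)); pose proof (Rabs_pos (dot a b)).
  assert (Heq : Rabs (dot u v) * (enorm a * enorm b) = Rabs (dot a b) * (enorm u * enorm v)).
  { apply Rsqr_inj; try (apply Rmult_le_pos; [lra | nra]).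
    unfold Rsqr. nra. }
  field_simplify_eq; [lra | split; lra].
Qed.

Lemma acos_le_sqrt t y : 0 < t -> 0 <= y <= 1 -> 1 - t / 3 <= y -> acos y <= sqrt t.
Proof.
  intros Ht Hy Hty. pose proof (acos_bound y). pose proof PI_RGT_0. pose proof PI_4.
  set (s := sqrt t). assert (Hs : s ^ 2 = t) by (apply pow2_sqrt; lra).
  assert (Hs0 : 0 <= s) by apply sqrt_pos.
  assert (Hcos : forall x, 0 <= x <= PI -> cos x <= y -> acos y <= x).
  { intros x Hx Hc. apply Rnot_lt_le. intro Hlt.
    pose proof (cos_decreasing_1 x (acos y) ltac:(lra) ltac:(lra) ltac:(lra) ltac:(lra) Hlt).
    rewrite cos_acos in H2 by lra. lra. }
  destruct (Rle_lt_dec s (PI / 2)) as [Hsmall | Hbig].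
  - apply Hcos; [lra |].
    (* [cos s <= 1 - s^2/2 + s^4/24 <= 1 - s^2/3] since [s^2 <= 4] *)
    destruct (cos_bound s 0 ltac:(lra) Hsmall) as [_ Hc].
    unfold cos_approx, cos_term in Hc. simpl in Hc.
    assert (s ^ 2 <= 4) by nra. nra.
  - apply Rle_trans with (PI / 2); [| lra]. apply Hcos; [lra |]. rewrite cos_PI2. lra.
Qed.

Lemma line_angle_unit_le a n t alpha : dot n n = 1 -> 0 < t -> enorm a <= alpha ->
  0 < dot a n -> alpha * (1 - t / 3) <= dot a n -> line_angle a n <= sqrt t.
Proof.
  intros Hn Ht Ha Hpos Hcos. unfold line_angle.
  pose proof (cauchy_schwarz a n) as CS. rewrite (enorm_unit n Hn), Rmult_1_r in *.
  rewrite Rabs_pos_eq in * by lra.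
  assert (Hna : 0 < enorm a) by lra.
  apply acos_le_sqrt; [exact Ht | split |].
  - apply Rle_mult_inv_pos; lra.
  - apply Rmult_le_reg_r with (enorm a); [lra |]. field_simplify; lra.
  - apply Rmult_le_reg_r with (enorm a); [lra |]. field_simplify; [| lra]. nra.
Qed.

(** * Chords of a circle almost touching the boundary *)

Definition cap_const (r alpha : R) : R := 4 * alpha * (r + alpha) / r.

Definition radial_crossing (r alpha d : R) (S : pt -> Prop) (z x : pt) (mu : R) (n : pt) :=
  0 <= mu <= 1 /\ d <= mu * alpha /\ rolling_normal r S (lerp z x mu) n /\
  sqdist x (shift z alpha n) <= cap_const r alpha * (alpha - d).

Lemma sqdist_antipode z x alpha n : sqdist x z = alpha ^ 2 -> dot n n = 1 ->
  sqdist x (shift z alpha n) = 2 * alpha * (alpha - dot (psub x z) n).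
Proof.
  intros Hx Hn.
  replace (sqdist x (shift z alpha n))
    with (sqdist x z - 2 * alpha * dot (psub x z) n + alpha ^ 2 * dot n n)
    by (destruct z, x, n; unfold sqdist, shift, dot, psub; simpl; ring).
  rewrite Hx, Hn. ring.
Qed.

Lemma sqdist_sphere z alpha x : sphere z alpha x -> sqdist x z = alpha ^ 2.
Proof. intros Hx. rewrite <- edist_sq. unfold sphere in Hx. rewrite Hx. reflexivity. Qed.

Lemma dot_sphere_bound z alpha x n : sphere z alpha x -> dot n n = 1 ->
  - alpha <= dot (psub x z) n <= alpha.
Proof.
  intros Hx Hn. apply Rabs_le_between. pose proof (cauchy_schwarz (psub x z) n) as CS.
  rewrite (enorm_unit n Hn), Rmult_1_r in CS. unfold sphere in Hx. unfold edist in Hx.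
  rewrite Hx in CS. exact CS.
Qed.

Lemma cap_gap_bound r alpha d mu c : 0 < r -> 0 < alpha -> alpha / 2 <= d <= mu * alpha ->
  mu <= 1 -> (d + r) ^ 2 <= (mu * alpha) ^ 2 + 2 * r * mu * c + r ^ 2 ->
  2 * alpha * (alpha - c) <= cap_const r alpha * (alpha - d).
Proof.
  intros Hr Ha Hd Hmu Hgap.
  assert (Hmu2 : 1 / 2 <= mu) by nra.
  assert (Hma : mu * alpha <= alpha) by nra.
  assert (H1 : 2 * r * mu * (alpha - c) <= 2 * (r + alpha) * (alpha - d)).
  { assert (0 <= (mu * alpha - d) * (2 * alpha - mu * alpha - d)) by (apply Rmult_le_pos; lra).
    assert (0 <= r * (alpha - mu * alpha)) by (apply Rmult_le_pos; lra). nra. }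
  assert (H2 : r * (alpha - c) <= 2 * (r + alpha) * (alpha - d)).
  { destruct (Rle_lt_dec c alpha).
    - assert (0 <= r * (2 * mu - 1) * (alpha - c)) by (apply Rmult_le_pos; [apply Rmult_le_pos |]; lra).
      nra.
    - assert (0 <= (r + alpha) * (alpha - d)) by (apply Rmult_le_pos; lra). nra. }
  unfold cap_const. apply Rmult_le_reg_l with r; [lra |].
  replace (r * (4 * alpha * (r + alpha) / r * (alpha - d)))
    with (2 * alpha * (2 * (r + alpha) * (alpha - d))) by (field; lra).
  nra.
Qed.

Lemma radial_crossing_exists r alpha d S z x : 0 < r -> 0 < alpha -> alpha / 2 <= d ->
  rolling r S -> rolling r (compl S) -> ~ S z -> (forall y, S y -> d <= edist z y) ->
  sphere z alpha x -> S x -> exists mu n, radial_crossing r alpha d S z x mu n.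
Proof.
  intros Hr Ha Hd HS HC Hz Hfar Hx HSx.
  destruct (boundary_on_segment S z x Hz HSx) as [mu [Hmu Hb]].
  destruct (rolling_normal_exists r S _ Hr HS HC Hb) as [n Hnormal].
  exists mu, n. pose proof Hnormal as [Hn [_ In]].
  assert (Hzp : edist z (lerp z x mu) = mu * alpha).
  { rewrite <- (lerp0 z x) at 1. rewrite edist_lerp, Rabs_left1, edist_sym, Hx by lra. ring. }
  assert (Hdmu : d <= mu * alpha) by (rewrite <- Hzp; apply (edist_boundary_ge S); auto).
  do 3 (split; auto).
  (* the inner tangent ball lies in [S], hence outside [B(z, d)] *)
  assert (Hin : d + r <= edist z (shift (lerp z x mu) r n)).
  { apply disjoint_balls_far; [lra | lra |]. intros y Y1 Y2.
    pose proof (Hfar y (In y Y2)). unfold oball in Y1. rewrite edist_sym in Y1. lra. }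
  apply sq_le_sqdist in Hin; [| lra].
  apply sqdist_sphere in Hx. rewrite (sqdist_antipode z x alpha n Hx Hn).
  replace (sqdist z (shift (lerp z x mu) r n))
    with (mu ^ 2 * sqdist x z + 2 * r * mu * dot (psub x z) n + r ^ 2 * dot n n) in Hin
    by (destruct z, x, n; unfold sqdist, shift, lerp, dot, psub; simpl; ring).
  rewrite Hx, Hn in Hin.
  apply (cap_gap_bound r alpha d mu); [lra | lra | lra | lra | nra].
Qed.

Lemma sq_sum3_le a b c : (a + b + c) ^ 2 <= 3 * (a ^ 2 + b ^ 2 + c ^ 2).
Proof.
  pose proof (pow2_ge_0 (a - b)); pose proof (pow2_ge_0 (a - c)); pose proof (pow2_ge_0 (b - c)).
  nra.
Qed.

Section Estimates.

Variables r alpha : R.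
Hypothesis Hr : 0 < r.
Hypothesis Halpha : 0 < alpha < r.

(* Each constant is the factor of [alpha - d] in one of the estimates of the
   configuration below, and is chosen as that estimate requires. *)
Definition chord_const := 3 * (alpha ^ 3 + 2 * r ^ 2 * cap_const r alpha) / (r - alpha) ^ 2.
Definition inner_const :=
  (chord_const + 2 * r * (chord_const + cap_const r alpha) / alpha + 2 * r + alpha) / (2 * r).
Definition near_const := inner_const + 2.
Definition normal_const := 3 * (near_const ^ 2 * alpha + chord_const + alpha).
Definition mid_const := 3 * (chord_const + cap_const r alpha + alpha ^ 2 * normal_const / r ^ 2).
Definition cos_const := (chord_const / 4 + mid_const) / (2 * alpha ^ 2).
Definition rolling_const :=
  3 + chord_const + near_const + 3 * cos_const + 2 * cos_const * alpha.

Lemma estimate_consts_pos :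
  0 < cap_const r alpha /\ 0 < chord_const /\ 0 < inner_const /\ 0 < normal_const /\
  0 < mid_const /\ 0 < cos_const.
Proof.
  assert (HE : 0 < cap_const r alpha) by (unfold cap_const; apply Rdiv_lt_0_compat; nra).
  assert (HL : 0 < chord_const).
  { unfold chord_const. apply Rdiv_lt_0_compat; [| apply pow_lt; lra].
    assert (0 < alpha ^ 3) by (apply pow_lt; lra). nra. }
  assert (HK : 0 < inner_const).
  { unfold inner_const. apply Rdiv_lt_0_compat; [| lra].
    assert (0 < 2 * r * (chord_const + cap_const r alpha) / alpha)
      by (apply Rdiv_lt_0_compat; nra). lra. }
  assert (HP : 0 < normal_const) by (unfold normal_const, near_const; nra).
  assert (HM : 0 < mid_const).
  { unfold mid_const. assert (0 < alpha ^ 2 * normal_const / r ^ 2)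
      by (apply Rdiv_lt_0_compat; [apply Rmult_lt_0_compat; [apply pow_lt |] | apply pow_lt]; lra).
    lra. }
  repeat split; auto. unfold cos_const. apply Rdiv_lt_0_compat; [lra | nra].
Qed.

Lemma rolling_const_bounds :
  3 <= rolling_const /\ chord_const <= rolling_const /\ near_const < rolling_const /\
  3 * cos_const <= rolling_const /\ 2 * cos_const * alpha <= rolling_const.
Proof.
  destruct estimate_consts_pos as [_ [HL [HK [_ [_ HC]]]]].
  assert (0 < cos_const * alpha) by (apply Rmult_lt_0_compat; lra).
  unfold rolling_const, near_const. repeat split; lra.
Qed.

Section Configuration.

Variables (d : R) (S : pt -> Prop) (z x1 x2 : pt) (mu1 mu2 : R) (n1 n2 : pt).
Hypothesis Hd : alpha / 2 <= d < alpha.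
Hypothesis Hfar : forall y, S y -> d <= edist z y.
Hypothesis Hx1 : sphere z alpha x1.
Hypothesis Hx2 : sphere z alpha x2.
Hypothesis Hcross1 : radial_crossing r alpha d S z x1 mu1 n1.
Hypothesis Hcross2 : radial_crossing r alpha d S z x2 mu2 n2.
Hypothesis Hrolling : rolling r S.
Hypothesis Hrolling_compl : rolling r (compl S).

Lemma chord_linear_bound :
  (r - alpha) * edist x1 x2 <=
  alpha * (alpha - d) + r * (edist x1 (shift z alpha n1) + edist x2 (shift z alpha n2)).
Proof.
  destruct Hcross1 as [Hm1 [Hd1 [Hnormal1 _]]], Hcross2 as [Hm2 [Hd2 [Hnormal2 _]]].
  pose proof (rolling_normal_lipschitz r S _ _ _ _ Hr Hnormal1 Hnormal2) as Hlip.
  assert (Hp : edist (lerp z x1 mu1) (lerp z x2 mu2) <= edist x1 x2 + (alpha - d)).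
  { eapply Rle_trans; [apply (edist_triangle _ (lerp z x2 mu1)) |].
    rewrite edist_lerp_same, edist_lerp by lra.
    unfold sphere in Hx2. rewrite (edist_sym z x2), Hx2.
    assert (Rabs (mu1 - mu2) * alpha <= alpha - d)
      by (unfold Rabs; destruct (Rcase_abs (mu1 - mu2)); nra).
    pose proof (edist_nonneg x1 x2). nra. }
  assert (Hchord : edist x1 x2 <=
    edist x1 (shift z alpha n1) + alpha * edist n1 n2 + edist x2 (shift z alpha n2)).
  { rewrite <- (edist_shift_same z alpha n1 n2) by lra. rewrite (edist_sym x2).
    eapply Rle_trans; [apply (edist_triangle _ (shift z alpha n1)) |].
    pose proof (edist_triangle (shift z alpha n1) (shift z alpha n2) x2). lra. }
  nra.
Qed.

Lemma chord_bound : edist x1 x2 ^ 2 <= chord_const * (alpha - d).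
Proof.
  destruct estimate_consts_pos as [HE _].
  pose proof chord_linear_bound as Hlin.
  destruct Hcross1 as [_ [_ [_ He1]]], Hcross2 as [_ [_ [_ He2]]].
  rewrite <- edist_sq in He1, He2.
  set (e1 := edist x1 (shift z alpha n1)) in *. set (e2 := edist x2 (shift z alpha n2)) in *.
  pose proof (edist_nonneg x1 x2). pose proof (edist_nonneg x1 (shift z alpha n1)).
  pose proof (edist_nonneg x2 (shift z alpha n2)).
  assert (Hsq : ((r - alpha) * edist x1 x2) ^ 2 <= 3 * (alpha ^ 3 + 2 * r ^ 2 * cap_const r alpha) * (alpha - d)).
  { apply Rle_trans with ((alpha * (alpha - d) + r * e1 + r * e2) ^ 2);
      [apply pow_incr; split; [apply Rmult_le_pos |]; lra |].
    eapply Rle_trans; [apply sq_sum3_le |].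
    assert (alpha ^ 2 * (alpha - d) ^ 2 <= alpha ^ 3 * (alpha - d)) by nra.
    nra. }
  unfold chord_const. apply Rmult_le_reg_r with ((r - alpha) ^ 2); [apply pow_lt; lra |].
  replace (3 * (alpha ^ 3 + 2 * r ^ 2 * cap_const r alpha) / (r - alpha) ^ 2 * (alpha - d) * (r - alpha) ^ 2)
    with (3 * (alpha ^ 3 + 2 * r ^ 2 * cap_const r alpha) * (alpha - d)) by (field; lra).
  nra.
Qed.

Lemma segment_inner_sqdist l : 0 <= l <= 1 ->
  sqdist (lerp x1 x2 l) (shift (lerp z x1 mu1) r n1) <=
  r ^ 2 + 2 * r * (alpha - d) + (alpha - d) ^ 2 + edist x1 x2 ^ 2 +
  r * (edist x1 x2 + edist x1 (shift z alpha n1)) ^ 2 / alpha.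
Proof.
  intros Hl. destruct Hcross1 as [Hm1 [Hd1 [[Hn1 _] _]]].
  pose proof (sqdist_sphere _ _ _ Hx1) as S1. pose proof (sqdist_sphere _ _ _ Hx2) as S2.
  pose proof (dot_sphere_bound _ _ _ n1 Hx1 Hn1) as Hc1.
  pose proof (dot_sphere_bound _ _ _ n1 Hx2 Hn1) as Hc12.
  set (c1 := dot (psub x1 z) n1) in *. set (c12 := dot (psub x2 z) n1) in *.
  set (L := edist x1 x2). set (e1 := edist x1 (shift z alpha n1)).
  assert (Hid : sqdist (lerp x1 x2 l) (shift (lerp z x1 mu1) r n1) =
    (1 - mu1) ^ 2 * sqdist x1 z + l ^ 2 * sqdist x1 x2 + r ^ 2 * dot n1 n1
    - (1 - mu1) * l * (sqdist x1 z + sqdist x1 x2 - sqdist x2 z)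
    - 2 * r * (1 - mu1) * c1 - 2 * r * l * (c12 - c1)).
  { unfold c1, c12. destruct z, x1, x2, n1.
    unfold sqdist, lerp, shift, dot, psub; simpl; ring. }
  rewrite Hid, S1, S2, Hn1, <- edist_sq. fold L. clear Hid.
  (* [2 alpha (alpha - c12)] is the squared distance from [x2] to [z + alpha n1] *)
  assert (Hfar2 : 2 * alpha * (alpha - c12) <= (L + e1) ^ 2).
  { unfold c12. rewrite <- (sqdist_antipode z x2 alpha n1 S2 Hn1). apply sqdist_le_sq.
    pose proof (edist_triangle x2 x1 (shift z alpha n1)).
    rewrite (edist_sym x2 x1) in H. fold L e1 in H. lra. }
  assert (T1 : (1 - mu1) ^ 2 * alpha ^ 2 <= (alpha - d) ^ 2)
    by (rewrite <- Rpow_mult_distr; apply pow_incr; split; nra).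
  assert (T2 : l ^ 2 * L ^ 2 <= L ^ 2).
  { assert (0 <= (1 - l ^ 2) * L ^ 2) by (apply Rmult_le_pos; [nra | apply pow2_ge_0]). lra. }
  assert (T3 : 0 <= (1 - mu1) * l * L ^ 2)
    by (apply Rmult_le_pos; [apply Rmult_le_pos | apply pow2_ge_0]; lra).
  assert (T4 : - (2 * r * (1 - mu1) * c1) <= 2 * r * (alpha - d)).
  { assert (0 <= r * (1 - mu1) * (alpha + c1))
      by (apply Rmult_le_pos; [apply Rmult_le_pos |]; lra). nra. }
  assert (T5 : 2 * r * l * (c1 - c12) <= r * (L + e1) ^ 2 / alpha).
  { apply Rmult_le_reg_l with alpha; [lra |].
    replace (alpha * (r * (L + e1) ^ 2 / alpha)) with (r * (L + e1) ^ 2) by (field; lra).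
    assert (0 <= r * alpha * (1 - l) * (alpha - c12))
      by (apply Rmult_le_pos; [apply Rmult_le_pos; [apply Rmult_le_pos |] |]; lra).
    assert (0 <= r * alpha * l * (alpha - c1))
      by (apply Rmult_le_pos; [apply Rmult_le_pos; [apply Rmult_le_pos |] |]; lra).
    nra. }
  lra.
Qed.

Lemma segment_inner_ball l : 0 <= l <= 1 ->
  edist (lerp x1 x2 l) (shift (lerp z x1 mu1) r n1) <= r + inner_const * (alpha - d).
Proof.
  intros Hl. destruct estimate_consts_pos as [HE [HL [HK _]]].
  pose proof chord_bound as HLsq.
  destruct Hcross1 as [_ [_ [_ He1]]]. rewrite <- edist_sq in He1.
  set (L := edist x1 x2) in *. set (e1 := edist x1 (shift z alpha n1)) in *.
  apply edist_le_sq; [nra |].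
  eapply Rle_trans; [apply segment_inner_sqdist; exact Hl |]. fold L e1.
  assert (Hsum : r * (L + e1) ^ 2 / alpha <=
                 2 * r * (chord_const + cap_const r alpha) / alpha * (alpha - d)).
  { apply Rmult_le_reg_r with alpha; [lra |].
    replace (r * (L + e1) ^ 2 / alpha * alpha) with (r * (L + e1) ^ 2) by (field; lra).
    replace (2 * r * (chord_const + cap_const r alpha) / alpha * (alpha - d) * alpha)
      with (r * (2 * (chord_const * (alpha - d) + cap_const r alpha * (alpha - d))))
      by (field; lra).
    apply Rmult_le_compat_l; [lra |]. pose proof (pow2_ge_0 (L - e1)). nra. }
  assert (H2rK : 2 * r * inner_const =
    chord_const + 2 * r * (chord_const + cap_const r alpha) / alpha + 2 * r + alpha)
    by (unfold inner_const; field; lra).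
  assert ((alpha - d) ^ 2 <= alpha * (alpha - d)) by nra.
  assert (0 <= (inner_const * (alpha - d)) ^ 2) by apply pow2_ge_0.
  nra.
Qed.

Lemma segment_near_boundary l : 0 <= l <= 1 ->
  exists b, boundary S b /\ edist (lerp x1 x2 l) b <= near_const * (alpha - d).
Proof.
  intros Hl. destruct estimate_consts_pos as [_ [_ [HK _]]].
  destruct Hcross1 as [_ [_ [[_ [_ In]] _]]].
  destruct (oball_approach _ r _ (inner_const * (alpha - d)) (alpha - d) ltac:(lra)
              ltac:(nra) (segment_inner_ball l Hl)) as [yin [Hyin Hxin]].
  assert (Hxz : edist (lerp x1 x2 l) z <= d + (alpha - d)).
  { rewrite edist_sym. apply edist_lerp_le; [exact Hl | |];
      unfold sphere in *; rewrite edist_sym; lra. }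
  destruct (oball_approach z d _ (alpha - d) (alpha - d) ltac:(lra) ltac:(lra) Hxz)
    as [yout [Hyout Hxout]].
  apply (near_boundary_between S _ yout yin).
  - intro HS. pose proof (Hfar yout HS). unfold oball in Hyout. rewrite edist_sym in Hyout. lra.
  - apply In, Hyin.
  - unfold near_const. nra.
  - unfold near_const. nra.
Qed.

Lemma normal_deviation_bound l p n : 0 <= l <= 1 -> rolling_normal r S p n ->
  edist (lerp x1 x2 l) p <= near_const * (alpha - d) ->
  (r * edist n1 n) ^ 2 <= normal_const * (alpha - d).
Proof.
  intros Hl Hnormal Hxp. destruct estimate_consts_pos as [_ [HL [HK _]]].
  destruct Hcross1 as [Hm1 [Hd1 [Hnormal1 _]]].
  pose proof (rolling_normal_lipschitz r S _ _ _ _ Hr Hnormal1 Hnormal) as Hlip.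
  pose proof chord_bound as HLsq. set (L := edist x1 x2) in *.
  assert (Hp1 : edist (lerp z x1 mu1) x1 <= alpha - d).
  { rewrite <- (lerp1 z x1) at 2. rewrite edist_lerp, Rabs_left1 by lra.
    unfold sphere in Hx1. rewrite edist_sym, Hx1. nra. }
  assert (Hx1x : edist x1 (lerp x1 x2 l) <= L).
  { rewrite <- (lerp0 x1 x2) at 1. rewrite edist_lerp, Rabs_left1 by lra.
    assert (0 <= L) by apply edist_nonneg. fold L. nra. }
  assert (Hpp : edist (lerp z x1 mu1) p <= (alpha - d) + L + near_const * (alpha - d)).
  { pose proof (edist_triangle (lerp z x1 mu1) x1 p).
    pose proof (edist_triangle x1 (lerp x1 x2 l) p). lra. }
  apply Rle_trans with (((alpha - d) + L + near_const * (alpha - d)) ^ 2).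
  { apply pow_incr. split; [apply Rmult_le_pos; [lra | apply edist_nonneg] | lra]. }
  eapply Rle_trans; [apply sq_sum3_le |].
  assert ((alpha - d) ^ 2 <= alpha * (alpha - d)) by nra.
  assert ((near_const * (alpha - d)) ^ 2 <= near_const ^ 2 * alpha * (alpha - d)).
  { rewrite Rpow_mult_distr. rewrite Rmult_assoc.
    apply Rmult_le_compat_l; [apply pow2_ge_0 | exact H]. }
  unfold normal_const. lra.
Qed.

Lemma midpoint_gap_bound l p n : 0 <= l <= 1 -> rolling_normal r S p n ->
  edist (lerp x1 x2 l) p <= near_const * (alpha - d) ->
  edist (lerp x1 x2 (1 / 2)) (shift z alpha n) ^ 2 <= mid_const * (alpha - d).
Proof.
  intros Hl Hnormal Hxp. destruct estimate_consts_pos as [HE [HL [_ [HP _]]]].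
  pose proof (normal_deviation_bound l p n Hl Hnormal Hxp) as HN.
  pose proof chord_bound as HLsq.
  destruct Hcross1 as [_ [_ [_ He1]]]. rewrite <- edist_sq in He1.
  set (L := edist x1 x2) in *. set (e1 := edist x1 (shift z alpha n1)) in *.
  set (N := edist n1 n) in *.
  assert (Hm1 : edist (lerp x1 x2 (1 / 2)) (shift z alpha n1) <= L + e1).
  { rewrite edist_sym. apply edist_lerp_le; [lra | |].
    - rewrite edist_sym. assert (0 <= L) by apply edist_nonneg. fold e1. lra.
    - pose proof (edist_triangle (shift z alpha n1) x1 x2).
      rewrite (edist_sym _ x1) in H. fold e1 L in H. lra. }
  assert (HG : edist (lerp x1 x2 (1 / 2)) (shift z alpha n) <= L + e1 + alpha * N).
  { pose proof (edist_triangle (lerp x1 x2 (1 / 2)) (shift z alpha n1) (shift z alpha n)).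
    rewrite edist_shift_same in H by lra. fold N in H. lra. }
  apply Rle_trans with ((L + e1 + alpha * N) ^ 2).
  { apply pow_incr. split; [apply edist_nonneg | exact HG]. }
  eapply Rle_trans; [apply sq_sum3_le |].
  assert (Hr2 : 0 < r ^ 2) by (apply pow_lt; lra).
  assert ((alpha * N) ^ 2 <= alpha ^ 2 * normal_const / r ^ 2 * (alpha - d)).
  { apply Rmult_le_reg_r with (r ^ 2); [exact Hr2 |].
    replace (alpha ^ 2 * normal_const / r ^ 2 * (alpha - d) * r ^ 2)
      with (alpha ^ 2 * (normal_const * (alpha - d))) by (field; lra).
    replace ((alpha * N) ^ 2 * r ^ 2) with (alpha ^ 2 * (r * N) ^ 2) by ring.
    apply Rmult_le_compat_l; [apply pow2_ge_0 | exact HN]. }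
  unfold mid_const. lra.
Qed.

Lemma midpoint_normal_dot l p n : 0 <= l <= 1 -> rolling_normal r S p n ->
  edist (lerp x1 x2 l) p <= near_const * (alpha - d) ->
  alpha * (1 - cos_const * (alpha - d)) <= dot (psub (lerp x1 x2 (1 / 2)) z) n.
Proof.
  intros Hl Hnormal Hxp. pose proof Hnormal as [Hn _].
  pose proof (midpoint_gap_bound l p n Hl Hnormal Hxp) as HG.
  pose proof chord_bound as HLsq.
  pose proof (sqdist_sphere _ _ _ Hx1) as S1. pose proof (sqdist_sphere _ _ _ Hx2) as S2.
  set (m := lerp x1 x2 (1 / 2)) in *.
  (* [2 alpha <m - z, n> = |m - z|^2 + alpha^2 - G^2] and [|m - z|^2 = alpha^2 - L^2 / 4] *)
  assert (Hid : 2 * alpha * dot (psub m z) n =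
                2 * alpha ^ 2 - edist x1 x2 ^ 2 / 4 - edist m (shift z alpha n) ^ 2).
  { rewrite !edist_sq.
    replace (sqdist m (shift z alpha n))
      with ((sqdist x1 z + sqdist x2 z) / 2 - sqdist x1 x2 / 4
            - 2 * alpha * dot (psub m z) n + alpha ^ 2 * dot n n)
      by (unfold m; destruct z, x1, x2, n; unfold sqdist, lerp, shift, dot, psub; simpl; field).
    rewrite S1, S2, Hn. field. }
  apply Rmult_le_reg_l with (2 * alpha); [lra |]. rewrite Hid.
  replace (2 * alpha * (alpha * (1 - cos_const * (alpha - d))))
    with (2 * alpha ^ 2 - (chord_const / 4 + mid_const) * (alpha - d))
    by (unfold cos_const; field; lra).
  lra.
Qed.

Lemma chord_angle_bound t x p v : x1 <> x2 -> segment x1 x2 x ->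
  is_proj (boundary S) x p -> tangent_dir (boundary S) p v -> 0 < t ->
  cos_const * (alpha - d) <= t / 3 -> cos_const * (alpha - d) < 1 ->
  line_angle (psub x2 x1) v <= sqrt t.
Proof.
  intros Hne [l [Hl ->]] [Hp Hmin] Htan Ht Hct Hc1.
  change (fst x1 + l * (fst x2 - fst x1), snd x1 + l * (snd x2 - snd x1))
    with (lerp x1 x2 l) in Hmin.
  destruct (segment_near_boundary l Hl) as [b [Hb Hxb]].
  assert (Hxp : edist (lerp x1 x2 l) p <= near_const * (alpha - d))
    by (pose proof (Hmin b Hb); lra).
  destruct (rolling_normal_exists r S p Hr Hrolling Hrolling_compl Hp) as [n Hnormal].
  pose proof Hnormal as [Hn _].
  pose proof (tangent_dir_perp_normal r S p n v Hr Hnormal Htan) as Hvn.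
  pose proof (midpoint_normal_dot l p n Hl Hnormal Hxp) as Hdot.
  set (a := psub (lerp x1 x2 (1 / 2)) z) in Hdot.
  assert (Hdot0 : 0 < dot a n) by (apply Rlt_le_trans with (2 := Hdot); nra).
  assert (Ha : enorm a <= alpha).
  { change (edist (lerp x1 x2 (1 / 2)) z <= alpha). rewrite edist_sym.
    apply edist_lerp_le; [lra | |]; unfold sphere in *; rewrite edist_sym; lra. }
  assert (Haa : 0 < dot a a).
  { pose proof (cauchy_schwarz a n). rewrite (enorm_unit n Hn), Rmult_1_r in H.
    pose proof (Rle_abs (dot a n)). rewrite <- enorm_sq. nra. }
  assert (Hua : dot (psub x2 x1) a = 0).
  { apply sqdist_sphere in Hx1, Hx2. unfold a.
    replace (dot _ _) with ((sqdist x2 z - sqdist x1 z) / 2)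
      by (destruct z, x1, x2; unfold sqdist, lerp, dot, psub; simpl; field).
    rewrite Hx1, Hx2. field. }
  rewrite (line_angle_normals (psub x2 x1) v a n).
  - apply (line_angle_unit_le a n t alpha); auto. nra.
  - fold (sqdist x2 x1). rewrite <- edist_sq. apply pow_lt, edist_pos. auto.
  - rewrite <- enorm_sq. apply pow_lt, enorm_pos, Htan.
  - exact Haa.
  - lra.
  - exact Hua.
  - exact Hvn.
Qed.

Lemma rolling_chord_estimates t : 0 < alpha - d -> (alpha - d) * rolling_const <= t ->
  0 < t <= alpha ->
  (forall x, segment x1 x2 x -> nbhd (boundary S) t x) /\
  edist x1 x2 <= sqrt t /\
  (x1 <> x2 ->
   forall x p v, segment x1 x2 x -> is_proj (boundary S) x p ->
     tangent_dir (boundary S) p v ->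
     line_angle (psub x2 x1) v <= sqrt t).
Proof.
  intros Hdel HA Ht. destruct rolling_const_bounds as [HA3 [HAL [HAK [HAC HACa]]]].
  destruct estimate_consts_pos as [_ [HL [_ [_ [_ HC]]]]].
  set (A := rolling_const) in *.
  assert (Hsmall : forall c, 0 <= c <= A -> c * (alpha - d) <= t).
  { intros c Hc. apply Rle_trans with ((alpha - d) * A); [nra | exact HA]. }
  split; [| split].
  - intros x [l [Hl ->]]. destruct (segment_near_boundary l Hl) as [b [Hb Hxb]].
    exists b. split; [exact Hb |]. change (edist (lerp x1 x2 l) b < t).
    assert (near_const * (alpha - d) < A * (alpha - d)) by (apply Rmult_lt_compat_r; lra).
    lra.
  - rewrite <- (sqrt_pow2 (edist x1 x2)) by apply edist_nonneg.
    apply sqrt_le_1_alt. pose proof chord_bound.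
    pose proof (Hsmall chord_const ltac:(lra)). lra.
  - intros Hne x p v Hx Hp Htan. apply (chord_angle_bound t x p v); auto; [lra | |].
    + pose proof (Hsmall (3 * cos_const) ltac:(lra)). lra.
    + (* [2 c alpha <= A] and [(alpha - d) A <= t <= alpha] give [c (alpha - d) <= 1/2] *)
      assert (Hc : 2 * cos_const * (alpha - d) * A <= 1 * A).
      { apply Rle_trans with (2 * cos_const * t); nra. }
      apply Rmult_le_reg_r in Hc; lra.
Qed.

End Configuration.
End Estimates.

Theorem lemma5 :
  forall r alpha : R, 0 < r -> 0 < alpha < r ->
  exists A : R, 0 < A /\
  forall (S : pt -> Prop) (t : R),
    rolling r S -> rolling r (compl S) ->
    0 < t <= Rmin alpha (2 * alpha ^ 2 / r) ->
    forall z x1 x2 : pt,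
      ~ S z ->
      0 < alpha - setdist z S <= t / A ->
      sphere z alpha x1 -> S x1 ->
      sphere z alpha x2 -> S x2 ->
      (forall x, segment x1 x2 x -> nbhd (boundary S) t x) /\
      edist x1 x2 <= sqrt t /\
      (x1 <> x2 ->
       forall x p v, segment x1 x2 x -> is_proj (boundary S) x p ->
         tangent_dir (boundary S) p v ->
         line_angle (psub x2 x1) v <= sqrt t).
Proof.
  intros r alpha Hr Halpha.
  destruct (rolling_const_bounds r alpha Hr Halpha) as [HA3 _].
  set (A := rolling_const r alpha) in *.
  exists A. split; [lra |].
  intros S t HS HC Ht z x1 x2 Hz Hd Hx1 HS1 Hx2 HS2.
  set (d := setdist z S) in *.
  assert (Hfar : forall y, S y -> d <= edist z y) by (intros y Hy; apply setdist_le, Hy).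
  assert (Hta : t <= alpha) by (pose proof (Rmin_l alpha (2 * alpha ^ 2 / r)); lra).
  assert (HdA : (alpha - d) * A <= t).
  { destruct Hd as [_ Hd]. apply Rmult_le_compat_r with (r := A) in Hd; [| lra].
    replace (t / A * A) with t in Hd by (field; lra). exact Hd. }
  assert (Hd2 : alpha / 2 <= d < alpha) by nra.
  destruct (radial_crossing_exists r alpha d S z x1) as [mu1 [n1 Hc1]]; try lra; auto.
  destruct (radial_crossing_exists r alpha d S z x2) as [mu2 [n2 Hc2]]; try lra; auto.
  apply (rolling_chord_estimates r alpha Hr Halpha d S z x1 x2 mu1 mu2 n1 n2); auto; lra.
Qed.
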